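(* Let $k \geq 1$ be an integer, let $A : \mathbb{Z} \to V$ be an array (any function from integers to some value set $V$), let $R$ be any predicate on pairs $(v,(x_1,\ldots,x_k)) \in V \times \mathbb{Z}^k$, and let $C$ be any predicate on $\mathbb{Z}^k$. Let $a_1,\ldots,a_k, b \in \mathbb{Z}$, let $\mathit{min}_1,\ldots,\mathit{min}_k \in \mathbb{Z}$ and $\mathit{max}_k \in \mathbb{Z}$, and put $n_k = \mathit{max}_k - \mathit{min}_k$. Define $$X(x_1,\ldots,x_k) \;=\; C(x_1,\ldots,x_k) \wedge \bigwedge_{i=1}^k (\mathit{min}_i \leq x_i) \wedge x_k < \mathit{max}_k,$$ and $f(x_1,\ldots,x_k) = \sum_{i=1}^k a_i x_i + b$. Define $\mathit{off} = \sum_{i=1}^k a_i\,\mathit{min}_i + b$, and for $x \in \mathbb{Z}$ define $\mathit{base}_k(x) = |x - \mathit{off}|$ and $\mathit{base}_i(x) = \mathit{base}_{i+1}(x) \bmod a_{i+1}$ for $1 \leq i < k$. Define $$f^{-1}(x) = \big(\mathit{base}_1(x)/|a_1| + \mathit{min}_1,\ \ldots,\ \mathit{base}_k(x)/|a_k| + \mathit{min}_k\big)$$ and $$Y(x) = C(f^{-1}(x)) \wedge \mathit{base}_1(x) \bmod a_1 = 0 \wedge \big(a_1 > 0 \Rightarrow 0 \leq x - \mathit{off} < a_k n_k\big) \wedge \big(a_1 < 0 \Rightarrow a_k n_k < x - \mathit{off} \leq 0\big).$$ Assume: (1) $n_k > 0$; (2) $a_i \neq 0$ for all $1 \leq i \leq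 k$; (3) for all $1 \leq i < k$, $a_i \geq 0 \iff a_{i+1} \geq 0$; (4) for all $1 \leq i < k$ and all $(x_1,\ldots,x_k) \in \mathbb{Z}^k$ with $X(x_1,\ldots,x_k)$, $\sum_{j=1}^{i} |a_j|\,(x_j - \mathit{min}_j) < |a_{i+1}|$. Then $$\Big(\forall (x_1,\ldots,x_k) \in \mathbb{Z}^k.\ X(x_1,\ldots,x_k) \Rightarrow R\big(A[f(x_1,\ldots,x_k)],(x_1,\ldots,x_k)\big)\Big) \iff \Big(\forall x \in \mathbb{Z}.\ Y(x) \Rightarrow R\big(A[x], f^{-1}(x)\big)\Big).$$
   Context: All quantities are integers. For an integer $u \geq 0$ and a nonzero integer $a$, $u \bmod a$ denotes the remainder of $u$ modulo $|a|$, i.e. the unique $r$ with $0 \leq r < |a|$ and $u \equiv r \pmod{|a|}$, and $u/|a|$ denotes integer division discarding the remainder (note all $\mathit{base}_i(x)$ are nonnegative). $A[y]$ denotes the value of the array $A$ at index $y$. The theorem expresses that a nested quantifier over $x_1,\ldots,x_k$ indexing $A$ by a linear expression is equivalent to a single quantifier over the index $x$. *)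

(* Dimension k >= 1 is represented as k.+1; coordinates are
   indexed by 'I_k.+1 (paper index i corresponds to ordinal i-1). *)
From HB Require Import structures.
From mathcomp Require Import all_boot all_order all_algebra.
Set Implicit Arguments. Unset Strict Implicit. Unset Printing Implicit Defensive.
Import Order.TTheory GRing.Theory Num.Theory.
Local Open Scope ring_scope.

Section Defs.
Variables (k : nat) (a mn : {ffun 'I_k.+1 -> int}) (b mxk : int).
Variable (C : {ffun 'I_k.+1 -> int} -> Prop).

Definition nk : int := mxk - mn ord_max.

Definition Xpred (xs : {ffun 'I_k.+1 -> int}) : Prop :=
  C xs /\ (forall i, mn i <= xs i) /\ xs ord_max < mxk.

Definition flin (xs : {ffun 'I_k.+1 -> int}) : int :=
  \sum_(i < k.+1) a i * xs i + b.

Definition off : int := \sum_(i < k.+1) a i * mn i + b.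

(* base_of for 0-based index i (<= k): base_k(x) = |x - off| and
   base_i(x) = base_{i+1}(x) mod a_{i+1}, i.e. the remainder of |x-off|
   successively reduced modulo a_k, a_{k-1}, ..., a_{i+1}. *)
Definition base_of (i : nat) (x : int) : int :=
  foldr (fun j u => (u %% a (inord j))%Z) `|x - off| (iota i.+1 (k - i)).

Definition f_inv (x : int) : {ffun 'I_k.+1 -> int} :=
  [ffun i : 'I_k.+1 => (base_of i x %/ `|a i|)%Z + mn i].

Definition Ypred (x : int) : Prop :=
  C (f_inv x) /\ (base_of 0 x %% a ord0)%Z = 0 /\
  (0 < a ord0 -> 0 <= x - off < a ord_max * nk) /\
  (a ord0 < 0 -> a ord_max * nk < x - off <= 0).

End Defs.

From HB Require Import structures.
From mathcomp Require Import all_boot all_order all_algebra.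
From mathcomp Require Import zify.
(* All a_i share the sign s of a_1, so f(x) - off = s * sum_i |a_i| (x_i - min_i).
   Hypothesis (4) says that the digits x_i - min_i form a mixed-radix
   representation of |f(x) - off| with place values |a_1|, ..., |a_k|: every
   partial sum stays below the next place value.  Hence the successive
   remainders base_i are exactly the partial sums, base_i / |a_i| is the i-th
   digit, and f and f^-1 are inverse bijections between the points satisfying
   X and those satisfying Y. *)

Set Implicit Arguments. Unset Strict Implicit. Unset Printing Implicit Defensive.
Import Order.TTheory GRing.Theory Num.Theory.
Local Open Scope ring_scope.

Lemma modz_normr (m d : int) : (m %% `|d|)%Z = (m %% d)%Z.
Proof.
by case: (ltrP d 0) => hd; [rewrite ltr0_norm // modzN | rewrite ger0_norm].
Qed.

Lemma chain_const k (T : Type) (p : 'I_k.+1 -> T) :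
  (forall i : 'I_k, p (widen_ord (leqnSn k) i) = p (lift ord0 i)) ->
  forall i, p i = p ord0.
Proof.
move=> hp [i]; elim: i => [|i IH] hi; first by congr p; apply: val_inj.
have hik : (i < k)%N by [].
have -> : Ordinal hi = lift ord0 (Ordinal hik) by apply: val_inj.
by rewrite -hp -(IH (ltnW hi)); congr p; apply: val_inj.
Qed.

Lemma numEsg_same_sign (R : realDomainType) (x y : R) :
  y != 0 -> (0 <= x) = (0 <= y) -> x = Num.sg y * `|x|.
Proof.
move=> /negPf y0 hxy; case: (ltrgtP y 0) y0 hxy => // hy _.
- rewrite ltr0_sg // mulN1r => /negbT; rewrite -ltNge => /ltr0_norm ->.
  by rewrite opprK.
- by rewrite gtr0_sg // mul1r => /ger0_norm ->.
Qed.

Lemma in_signed_range (e d m : int) : e != 0 ->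
  ((0 < e -> 0 <= d < Num.sg e * m) /\ (e < 0 -> Num.sg e * m < d <= 0)) <->
  d = Num.sg e * `|d| /\ `|d| < m.
Proof.
move=> /negPf e0; case: (ltrgtP e 0) e0 => // he _.
- rewrite ltr0_sg // !mulN1r; lia.
- rewrite gtr0_sg // !mul1r; lia.
Qed.

Section FilteredSums.
Variables (R : nmodType) (k : nat) (F : 'I_k.+1 -> R).

Lemma big_ord_le0 : \sum_(j < k.+1 | (j <= 0)%N) F j = F ord0.
Proof. by rewrite (big_pred1 ord0) // => j; rewrite leqn0. Qed.

Lemma big_ord_leS i : (i < k)%N ->
  \sum_(j < k.+1 | (j <= i.+1)%N) F j =
  \sum_(j < k.+1 | (j <= i)%N) F j + F (inord i.+1).
Proof.
move=> hi; rewrite (bigD1 (inord i.+1)) /=; last by rewrite inordK.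
rewrite addrC; congr (_ + _); apply: eq_bigl => j.
rewrite -val_eqE /= inordK; last by lia.
by apply/andP/idP => [[]|]; lia.
Qed.

Lemma big_ord_le_max : \sum_(j < k.+1 | (j <= k)%N) F j = \sum_(j < k.+1) F j.
Proof. by apply: eq_bigl => j; rewrite leq_ord. Qed.

End FilteredSums.

Section RemainderChain.
Variables (k : nat) (w : 'I_k.+1 -> int) (r : nat -> int).
Hypothesis w_neq0 : forall i, w i != 0.
Hypothesis r_step : forall i, (i < k)%N -> r i = (r i.+1 %% w (inord i.+1))%Z.

Lemma chain_ge0 i : (i <= k)%N -> 0 <= r k -> 0 <= r i.
Proof.
move=> + rk; case: (ltngtP i k) => // [hi _ | -> //].
by rewrite r_step // -modz_normr modz_ge0 ?normr_eq0.
Qed.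

Lemma chain_expand : (r 0 %% w ord0)%Z = 0 -> forall i, (i <= k)%N ->
  r i = \sum_(j < k.+1 | (j <= i)%N) `|w j| * (r j %/ `|w j|)%Z.
Proof.
move=> r0; elim=> [|i IH] hi.
  by rewrite big_ord_le0 {1}(divz_eq (r 0) `|w ord0|) modz_normr r0 addr0 mulrC.
rewrite big_ord_leS // -IH ?(ltnW hi) // (r_step hi) inordK //.
by rewrite {1}(divz_eq (r i.+1) `|w (inord i.+1)|) modz_normr addrC mulrC.
Qed.

Variable y : 'I_k.+1 -> int.
Hypothesis y_ge0 : forall j, 0 <= y j.
Hypothesis psum_lt : forall i : 'I_k,
  \sum_(j < k.+1 | (j <= i)%N) `|w j| * y j < `|w (lift ord0 i)|.

Local Notation psum i := (\sum_(j < k.+1 | (j <= i)%N) `|w j| * y j).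

Lemma psum_ge0 i : 0 <= psum i.
Proof. by apply: sumr_ge0 => j _; rewrite mulr_ge0. Qed.

Lemma psum_ltS i : (i < k)%N -> psum i < `|w (inord i.+1)|.
Proof.
move=> hi; have -> : inord i.+1 = lift ord0 (Ordinal hi).
  by apply: val_inj; rewrite /= inordK.
exact: (psum_lt (Ordinal hi)).
Qed.

Lemma psum_divz (j : 'I_k.+1) : (psum j %/ `|w j|)%Z = y j.
Proof.
case: j => [[|i] hj] /=.
  have -> : Ordinal hj = ord0 by apply: val_inj.
  by rewrite big_ord_le0 mulKz ?normr_eq0.
have hi : (i < k)%N by [].
rewrite big_ord_leS //; have -> : Ordinal hj = inord i.+1.
  by apply: val_inj; rewrite /= inordK.
rewrite addrC mulrC divzMDl ?normr_eq0 // divz_small ?addr0 //.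
by rewrite psum_ge0 /= psum_ltS.
Qed.

Lemma psum_ltM (j : 'I_k.+1) : psum j < `|w j| * (y j + 1).
Proof.
case: j => [[|i] hj] /=.
  have -> : Ordinal hj = ord0 by apply: val_inj.
  by rewrite big_ord_le0 ltr_pM2l ?normr_gt0 // ltrDl.
have hi : (i < k)%N by [].
rewrite big_ord_leS //; have -> : Ordinal hj = inord i.+1.
  by apply: val_inj; rewrite /= inordK.
by rewrite mulrDr mulr1 addrC ltrD2l psum_ltS.
Qed.

Lemma chain_eq_psum : r k = psum k -> forall i, (i <= k)%N -> r i = psum i.
Proof.
move=> rk i hi; rewrite -(subKn hi); elim: (k - i)%N (leq_subr i k) => [|d IH] hd.
  by rewrite subn0.
have hdk : (k - d.+1 < k)%N by lia.
have hS : (k - d.+1).+1 = (k - d)%N by lia.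
rewrite r_step // hS IH ?(ltnW hd) // -hS big_ord_leS // -modz_normr.
by rewrite addrC mulrC modzMDl modz_small // psum_ge0 psum_ltS.
Qed.

End RemainderChain.

Section LinearIndex.
Variables (k : nat) (a mn : {ffun 'I_k.+1 -> int}) (b mxk : int).
Variable C : {ffun 'I_k.+1 -> int} -> Prop.

Lemma base_of_last x : base_of a mn b k x = `|x - off a mn b|.
Proof. by rewrite /base_of subnn. Qed.

Lemma base_of_step x i : (i < k)%N ->
  base_of a mn b i x = (base_of a mn b i.+1 x %% a (inord i.+1))%Z.
Proof.
by move=> hi; rewrite /base_of (_ : (k - i = (k - i.+1).+1)%N) //; lia.
Qed.

Lemma flin_sub_off xs :
  flin a b xs - off a mn b = \sum_(i < k.+1) a i * (xs i - mn i).
Proof.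
under [RHS]eq_bigr => i _ do rewrite mulrBr.
by rewrite sumrB /flin /off opprD addrACA subrr addr0.
Qed.

Hypothesis a_neq0 : forall i, a i != 0.
Hypothesis a_ge0_chain : forall i : 'I_k,
  (0 <= a (widen_ord (leqnSn k) i)) = (0 <= a (lift ord0 i)).

Local Notation s := (Num.sg (a ord0)).

Lemma a_sg_norm i : a i = s * `|a i|.
Proof.
apply: numEsg_same_sign (a_neq0 ord0) _.
exact: (chain_const (p := fun i => 0 <= a i)).
Qed.

Lemma flin_sub_off_sg xs :
  flin a b xs - off a mn b = s * \sum_(i < k.+1) `|a i| * (xs i - mn i).
Proof.
rewrite flin_sub_off mulr_sumr.
by apply: eq_bigr => i _; rewrite mulrA -a_sg_norm.
Qed.

Lemma Ypred_rangeE x :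
  (0 < a ord0 -> 0 <= x - off a mn b < a ord_max * nk mn mxk) /\
  (a ord0 < 0 -> a ord_max * nk mn mxk < x - off a mn b <= 0) <->
  x - off a mn b = s * `|x - off a mn b| /\
  `|x - off a mn b| < `|a ord_max| * nk mn mxk.
Proof.
rewrite [a ord_max * _](_ : _ = s * (`|a ord_max| * nk mn mxk)).
  exact: in_signed_range.
by rewrite mulrA -a_sg_norm.
Qed.

Section FromY.
Variable x : int.
Hypothesis Yx : Ypred a mn b mxk C x.

Lemma flin_f_inv : flin a b (f_inv a mn b x) = x.
Proof.
have [_ [base0 /Ypred_rangeE [x_sg _]]] := Yx.
apply: (addIr (- off a mn b)); rewrite flin_sub_off_sg x_sg -base_of_last.
rewrite (chain_expand (base_of_step x) base0 (leqnn k)) big_ord_le_max.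
by congr (_ * _); apply: eq_bigr => i _; rewrite ffunE addrK.
Qed.

Lemma Xpred_f_inv : Xpred mn mxk C (f_inv a mn b x).
Proof.
have [Cx [_ /Ypred_rangeE [_ x_lt]]] := Yx.
split=> //; split=> [i|]; rewrite ffunE.
  rewrite lerDr divz_ge0 ?normr_gt0 //.
  by apply: (chain_ge0 a_neq0 (base_of_step x)); rewrite ?leq_ord // base_of_last.
rewrite -ltrBrDr ltz_divLR ?normr_gt0 // base_of_last mulrC.
by move: x_lt; rewrite /nk.
Qed.

End FromY.

Section FromX.
Variable xs : {ffun 'I_k.+1 -> int}.
Hypothesis Xxs : Xpred mn mxk C xs.
Hypothesis xs_psum_lt : forall i : 'I_k,
  \sum_(j < k.+1 | (j <= i)%N) `|a j| * (xs j - mn j) < `|a (lift ord0 i)|.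

Local Notation y := (fun j => xs j - mn j).

Lemma xs_sub_mn_ge0 j : 0 <= y j.
Proof. by case: Xxs => _ [xs_ge _]; rewrite subr_ge0. Qed.

Lemma base_of_flin i : (i <= k)%N ->
  base_of a mn b i (flin a b xs) = \sum_(j < k.+1 | (j <= i)%N) `|a j| * y j.
Proof.
apply: (chain_eq_psum (base_of_step _) xs_sub_mn_ge0 xs_psum_lt).
rewrite base_of_last flin_sub_off_sg normrM normr_sg a_neq0 mul1r.
rewrite big_ord_le_max ger0_norm //.
by apply: sumr_ge0 => j _; rewrite mulr_ge0 // xs_sub_mn_ge0.
Qed.

Lemma f_inv_flin : f_inv a mn b (flin a b xs) = xs.
Proof.
apply/ffunP => j; rewrite ffunE base_of_flin ?leq_ord //.
by rewrite (psum_divz a_neq0 xs_sub_mn_ge0 xs_psum_lt) subrK.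
Qed.

Lemma Ypred_flin : Ypred a mn b mxk C (flin a b xs).
Proof.
have [Cxs [_ xs_lt]] := Xxs.
rewrite /Ypred f_inv_flin; split=> //; split.
  by rewrite base_of_flin // big_ord_le0 -modz_normr modzMr.
apply/Ypred_rangeE; rewrite -base_of_last base_of_flin //; split.
  by rewrite flin_sub_off_sg big_ord_le_max.
apply: lt_le_trans (psum_ltM a_neq0 xs_psum_lt ord_max) _.
by rewrite ler_pM2l ?normr_gt0 // /nk; lia.
Qed.

End FromX.

End LinearIndex.

Theorem theorem1 (k : nat) (V : Type) (A : int -> V)
  (R : V -> {ffun 'I_k.+1 -> int} -> Prop)
  (C : {ffun 'I_k.+1 -> int} -> Prop)
  (a mn : {ffun 'I_k.+1 -> int}) (b mxk : int)
  (h1 : 0 < nk mn mxk)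
  (h2 : forall i : 'I_k.+1, a i != 0)
  (h3 : forall i : 'I_k,
      (0 <= a (widen_ord (leqnSn k) i)) = (0 <= a (lift ord0 i)))
  (h4 : forall (i : 'I_k) (xs : {ffun 'I_k.+1 -> int}),
      Xpred mn mxk C xs ->
      \sum_(j < k.+1 | (j <= i)%N) `|a j| * (xs j - mn j) < `|a (lift ord0 i)|) :
  (forall xs : {ffun 'I_k.+1 -> int},
      Xpred mn mxk C xs -> R (A (flin a b xs)) xs) <->
  (forall x : int, Ypred a mn b mxk C x -> R (A x) (f_inv a mn b x)).
Proof.
split=> [HX x Yx | HY xs Xxs].
  by rewrite -{1}(flin_f_inv h2 h3 Yx); apply/HX/(Xpred_f_inv h2 h3 Yx).
have xs_psum_lt := fun i => h4 i xs Xxs.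
rewrite -{2}(f_inv_flin b h2 h3 Xxs xs_psum_lt).
exact/HY/(Ypred_flin b h2 h3 Xxs xs_psum_lt).
Qed.
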